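(* Let $(\mathcal X,\mathcal B,\pi)$ be a measure space with $\pi$ $\sigma$-finite, $r:\mathcal X\to\mathbb R$ measurable, $\{\varepsilon(x)\}$ a real-valued random field with i.i.d. copies $\varepsilon_1,\dots,\varepsilon_K$, $K$ a finite integer $\ge2$, and $p\in\mathcal P_\pi$. Let $X_1,\dots,X_K$ be i.i.d. with density $p$, independent of the noise, and let $\widehat X=X_I$ be the Plackett–Luce curated sample. Then for every measurable $f$ with $\mathbb E_{X\sim p}|f(X)|<\infty$, $$\mathbb E[f(\widehat X)]=\mathbb E_{X\sim p}\bigl[f(X)H^K_p(X)\bigr].$$ Consequently, the density of $\widehat X$ w.r.t. $\pi$ is $pH^K_p$.
   Context: $\mathcal P_\pi$ = probability densities w.r.t. $\pi$. Plackett–Luce curation: with $\tilde w_k=e^{r(X_k)+\varepsilon_k(X_k)}$, the index $I\in\{1,\dots,K\}$ is drawn with $\mathbb P(I=k\mid X_{1:K},\varepsilon_{1:K})=\tilde w_k/\sum_{i=1}^K\tilde w_i$. The choice kernel is $H^K_p(x):=\mathbb E\bigl[K e^{r(x)+\varepsilon(x)}/(e^{r(x)+\varepsilon(x)}+\sum_{k=1}^{K-1}e^{r(X_k)+\varepsilon_k(X_k)})\bigr]$ with $X_1,\dots,X_{K-1}$ i.i.d. with density $p$ and $\varepsilon,\varepsilon_1,\dots,\varepsilon_{K-1}$ i.i.d. copies of the noise field, all independent. *)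

From HB Require Import structures.
From mathcomp Require Import all_boot all_order all_algebra.
From mathcomp Require Import all_classical all_reals all_analysis.
Set Implicit Arguments. Unset Strict Implicit. Unset Printing Implicit Defensive.
Import Order.TTheory GRing.Theory Num.Theory.
Local Open Scope ring_scope.
Local Open Scope classical_set_scope.

Section PL.
Context {R : realType} {dX dO : measure_display}
  {X : measurableType dX} {Omega : measurableType dO}.
Variables (pi : {measure set X -> \bar R}) (P : probability Omega R)
  (p : X -> R) (r : X -> R) (eps : Omega -> X -> R).

Definition pl_weight (t : X * Omega) : R := expR (r t.1 + eps t.2 t.1).

(* One i.i.d. draw (X, eps) with X of density p w.r.t. pi and the noise
   field eps(omega, .) with omega ~ P, independent of X. *)
Definition draw_int (F : X * Omega -> \bar R) : \bar R :=
  (\int[pi]_x ((p x)%:E * \int[P]_w F (x, w)))%E.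

(* Expectation over n i.i.d. draws (X_1,eps_1),...,(X_n,eps_n), written as
   the iterated integral (Fubini) over the n-fold product law. *)
Fixpoint iid_int (n : nat) (F : seq (X * Omega) -> \bar R) : \bar R :=
  match n with
  | 0 => F [::]
  | n.+1 => draw_int (fun t => iid_int n (fun s => F (t :: s)))
  end.

(* Conditional expectation of f(X_I) given the draws, where
   P(I = k | X_{1:K}, eps_{1:K}) = w_k / sum_i w_i. *)
Definition curated_cond (f : X -> R) (s : seq (X * Omega)) : R :=
  \sum_(t <- s) (pl_weight t / (\sum_(u <- s) pl_weight u) * f t.1).

Definition curated_expect (K : nat) (f : X -> R) : \bar R :=
  iid_int K (fun s => (curated_cond f s)%:E).

Definition choice_kernel (K : nat) (x : X) : \bar R :=
  (\int[P]_w iid_int K.-1 (fun s =>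
     ((K%:R * expR (r x + eps w x)) /
      (expR (r x + eps w x) + \sum_(t <- s) pl_weight t))%:E))%E.

End PL.

From HB Require Import structures.
From mathcomp Require Import all_boot all_order all_algebra.
From mathcomp Require Import all_classical all_reals all_analysis.
From mathcomp Require Import measurable_realfun ring lra.
Set Implicit Arguments. Unset Strict Implicit. Unset Printing Implicit Defensive.
Import Order.TTheory GRing.Theory Num.Theory.
Local Open Scope ring_scope.
Local Open Scope classical_set_scope.

(* Exchangeability of the K draws gives
     E[sum_k w_k f(X_k) / sum_i w_i] = K E[f(X_1) w_1 / (w_1 + sum_(i>=2) w_i)],
   the right-hand side being the integral of f p H^K_p.  As the draws are nested
   integrals, this is proved by induction on the number of draws, for the weighted
   mean with an offset c added to the denominator: peeling off the first draw t
   leaves the share of t plus a weighted mean with offset c + w_t, and Fubini's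
   theorem exchanges t with the next draw, turning the latter into further shares
   of t.  A signed f is split as f^+ - f^-, both parts being dominated by
   sum_k |f(X_k)|, which is integrable. *)

Lemma measurable_inv (R : realType) : measurable_fun [set: R] (@GRing.inv R).
Proof.
have -> : [set: R] = [set 0] `|` [set x | x != 0].
  by apply/seteqP; split => x //= _; case: (eqVneq x 0) => [->|]; [left|right].
have neq0E : [set x : R | x != 0] = ~` [set 0] by apply/seteqP; split => x /= /eqP.
apply/measurable_funU => //; first by rewrite neq0E; exact: measurableC.
split; first exact: measurable_fun_set1.
apply: open_continuous_measurable_fun; first exact: open_neq.
by move=> x /set_mem x0; exact: inv_continuous.
Qed.

Lemma measurable_EFin_max0 d (Z : measurableType d) (R : realType) (h : Z -> R) :
  measurable_fun setT h -> measurable_fun setT (fun z => (Num.max (h z) 0)%:E).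
Proof. by move=> mh; apply/measurable_EFinP; exact: measurable_maxr. Qed.

Lemma sum_mul_le_mul_sum (R : realDomainType) (I : Type) (s : seq I) (a b : I -> R) :
  (forall i, 0 <= a i) -> (forall i, 0 <= b i) ->
  \sum_(i <- s) a i * b i <= (\sum_(i <- s) a i) * \sum_(i <- s) b i.
Proof.
move=> a0 b0; elim: s => [|i s IH]; first by rewrite !big_nil mul0r.
have A0 : 0 <= \sum_(j <- s) a j by exact: sumr_ge0.
have B0 : 0 <= \sum_(j <- s) b j by exact: sumr_ge0.
rewrite !big_cons; have := a0 i; have := b0 i; nra.
Qed.

Section draws.
Context {R : realType} {dX dO : measure_display}
  {X : measurableType dX} {Omega : measurableType dO}.
Variables (pi : {measure set X -> \bar R}) (P : probability Omega R) (p : X -> R).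
Hypotheses (pi_sigma_finite : sigma_finite setT pi)
  (mp : measurable_fun setT p) (p_ge0 : forall x, 0 <= p x).

Local Notation T := (X * Omega)%type.
Local Notation draw := (draw_int pi P p).
Local Notation iid := (iid_int pi P p).

Definition sigma_finite_pi := (pi : set X -> \bar R).
HB.instance Definition _ := Measure.on sigma_finite_pi.
HB.instance Definition _ :=
  Measure_isSigmaFinite.Build _ _ _ sigma_finite_pi pi_sigma_finite.

(* The library's σ-finiteness instance for products is not inferred here. *)
Let pi_P_sigma_finite : sigma_finite setT (sigma_finite_pi \x P)%E.
Proof.
have /sigma_finiteP[F [TF ndF Foo]] := sigma_finiteT sigma_finite_pi.
have /sigma_finiteP[G [TG ndG Goo]] := sigma_finiteT P.
exists (fun n => F n `*` G n).
  rewrite -setXTT TF TG predeqE => -[x y]; split.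
    move=> [/= [n _ Fnx] [k _ Gky]]; exists (maxn n k) => //; split.
    - by move: x Fnx; exact/subsetPset/ndF/leq_maxl.
    - by move: y Gky; exact/subsetPset/ndG/leq_maxr.
  by move=> [n _ []/= ? ?]; split; exists n.
move=> k; have [? ?] := Foo k; have [? ?] := Goo k.
split; first exact: measurableX.
by rewrite product_measure1E// lte_mul_pinfty// ge0_fin_numE.
Qed.

Definition pi_P := (sigma_finite_pi \x P)%E.
HB.instance Definition _ := Measure.on pi_P.
HB.instance Definition _ := Measure_isSigmaFinite.Build _ _ _ pi_P pi_P_sigma_finite.

Local Open Scope ereal_scope.

Lemma measurable_density : measurable_fun setT (fun t : T => (p t.1)%:E).
Proof. by apply/measurable_EFinP; exact: measurableT_comp. Qed.

Lemma density_ge0 (t : T) : 0 <= (p t.1)%:E.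
Proof. by rewrite lee_fin. Qed.

Lemma le_integral_probability (A : Omega -> \bar R) (c : R) :
  measurable_fun setT A -> (forall o, 0 <= A o) -> (forall o, A o <= c%:E) ->
  \int[P]_o A o <= c%:E.
Proof.
move=> mA A0 Ac; rewrite -[leRHS]mule1 -[X in _ * X](probability_setT P) -integral_cst //.
exact: ge0_le_integral.
Qed.

Lemma draw_ge0 (G : T -> \bar R) : (forall t, 0 <= G t) -> 0 <= draw G.
Proof.
move=> G0; apply: integral_ge0 => x _; apply: mule_ge0; first by rewrite lee_fin.
exact: integral_ge0.
Qed.

Lemma iidS n (F : seq T -> \bar R) :
  iid n.+1 F = draw (fun t => iid n (fun s => F (t :: s))).
Proof. by []. Qed.

Lemma iid_ge0 n (F : seq T -> \bar R) : (forall s, 0 <= F s) -> 0 <= iid n F.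
Proof. by elim: n F => [|n IH] F F0 //=; apply: draw_ge0 => t; exact: IH. Qed.

Lemma draw_prodE (G : T -> \bar R) : measurable_fun setT G -> (forall t, 0 <= G t) ->
  draw G = \int[pi_P]_t ((p t.1)%:E * G t).
Proof.
move=> mG G0; rewrite fubini_tonelli1; last 2 first.
- exact: emeasurable_funM measurable_density mG.
- by move=> t; exact: mule_ge0 (density_ge0 t) (G0 t).
apply: eq_integral => x _; rewrite /fubini_F /= ge0_integralZl_EFin //.
exact: measurableT_comp mG (pair1_measurable x).
Qed.

Lemma measurable_draw d (Z : measurableType d) (G : Z * T -> \bar R) :
  measurable_fun setT G -> (forall y, 0 <= G y) ->
  measurable_fun setT (fun z => draw (fun t => G (z, t))).
Proof.
move=> mG G0.
have -> : (fun z => draw (fun t => G (z, t))) =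
    fubini_F pi_P (fun y : Z * T => (p y.2.1)%:E * G y).
  by apply/funext => z; rewrite draw_prodE //; exact: measurableT_comp mG (pair1_measurable z).
apply: (measurable_fun_fubini_tonelli_F (fun y : Z * T => (p y.2.1)%:E * G y)).
  exact: emeasurable_funM (measurableT_comp measurable_density measurable_snd) mG.
by move=> y; exact: mule_ge0 (density_ge0 _) (G0 _).
Qed.

Lemma drawD (A B : T -> \bar R) :
  measurable_fun setT A -> (forall t, 0 <= A t) ->
  measurable_fun setT B -> (forall t, 0 <= B t) ->
  draw (fun t => A t + B t) = draw A + draw B.
Proof.
move=> mA A0 mB B0; rewrite !draw_prodE //; last 2 first.
- exact: emeasurable_funD.
- by move=> t; exact: adde_ge0 (A0 t) (B0 t).
under eq_integral do rewrite ge0_muleDr //.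
rewrite ge0_integralD //.
- by move=> t _; exact: mule_ge0 (density_ge0 t) (A0 t).
- exact: emeasurable_funM measurable_density mA.
- by move=> t _; exact: mule_ge0 (density_ge0 t) (B0 t).
- exact: emeasurable_funM measurable_density mB.
Qed.

Lemma drawZ (k : R) (A : T -> \bar R) : (0 <= k)%R ->
  measurable_fun setT A -> (forall t, 0 <= A t) ->
  draw (fun t => k%:E * A t) = k%:E * draw A.
Proof.
move=> k0 mA A0; rewrite !draw_prodE //; last 2 first.
- exact: measurable_funeM.
- by move=> t; apply: mule_ge0 (A0 t); rewrite lee_fin.
under eq_integral do rewrite muleCA.
rewrite ge0_integralZl_EFin //.
- by move=> t _; exact: mule_ge0 (density_ge0 t) (A0 t).
- exact: emeasurable_funM measurable_density mA.
Qed.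

Lemma le_draw (A B : T -> \bar R) :
  measurable_fun setT A -> (forall t, 0 <= A t) ->
  measurable_fun setT B -> (forall t, A t <= B t) ->
  draw A <= draw B.
Proof.
move=> mA A0 mB AB; rewrite !draw_prodE //; last by move=> t; exact: le_trans (AB t).
apply: ge0_le_integral => //.
- by move=> t _; exact: mule_ge0 (density_ge0 t) (A0 t).
- exact: emeasurable_funM measurable_density mA.
- exact: emeasurable_funM measurable_density mB.
- by move=> t _; exact: lee_wpmul2l (density_ge0 t) _ _ (AB t).
Qed.

Lemma exchange_draw (F : T * T -> \bar R) :
  measurable_fun setT F -> (forall y, 0 <= F y) ->
  draw (fun t => draw (fun u => F (t, u))) = draw (fun u => draw (fun t => F (t, u))).
Proof.
move=> mF F0.
have mFC : measurable_fun setT (fun y : T * T => F (y.2, y.1)).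
  exact: measurableT_comp mF (measurable_fun_pair measurable_snd measurable_fst).
have mpF : measurable_fun setT (fun y : T * T => (p y.1.1)%:E * ((p y.2.1)%:E * F y)).
  apply: emeasurable_funM; first exact: measurableT_comp measurable_density measurable_fst.
  exact: emeasurable_funM (measurableT_comp measurable_density measurable_snd) mF.
have pF0 (y : T * T) : 0 <= (p y.1.1)%:E * ((p y.2.1)%:E * F y).
  by rewrite mule_ge0 ?density_ge0 // mule_ge0 ?density_ge0.
rewrite draw_prodE; [|exact: measurable_draw|by move=> t; exact: draw_ge0].
rewrite [RHS]draw_prodE; last 2 first.
- exact: measurable_draw mFC (fun y => F0 _).
- by move=> t; exact: draw_ge0.
transitivity (\int[pi_P]_t \int[pi_P]_u
    ((p t.1)%:E * ((p u.1)%:E * F (t, u)))).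
  apply: eq_integral => t _.
  rewrite draw_prodE //; last exact: measurableT_comp mF (pair1_measurable t).
  rewrite ge0_integralZl_EFin //; first by move=> u _; exact: mule_ge0 (density_ge0 u) (F0 _).
  exact: emeasurable_funM measurable_density (measurableT_comp mF (pair1_measurable t)).
rewrite (fubini_tonelli _ mpF pF0); apply: eq_integral => u _.
rewrite draw_prodE //; last exact: measurableT_comp mF (pair2_measurable u).
rewrite -ge0_integralZl_EFin //.
- by apply: eq_integral => t _; rewrite muleCA.
- by move=> t _; exact: mule_ge0 (density_ge0 t) (F0 _).
- exact: emeasurable_funM measurable_density (measurableT_comp mF (pair2_measurable u)).
Qed.

Lemma draw_fstM (g : X -> R) (A : T -> \bar R) : (forall x, (0 <= g x)%R) ->
  measurable_fun setT A -> (forall t, 0 <= A t) ->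
  draw (fun t => (g t.1)%:E * A t) = \int[pi]_x ((g x * p x)%:E * \int[P]_o A (x, o)).
Proof.
move=> g0 mA A0; apply: eq_integral => x _ /=.
rewrite ge0_integralZl_EFin //; last exact: measurableT_comp mA (pair1_measurable x).
by rewrite muleA -EFinM mulrC.
Qed.

Hypothesis p_int1 : \int[pi]_x (p x)%:E = 1.

(* [seq T] carries no σ-algebra, so functionals of the draws are taken of the form
   [fun s => Phi (z, foldr step v0 s)] for a statistic with values in a measurable
   space [V]; their iterated integrals are then measurable in the parameter [z]. *)
Section statistic.
Variables (dV : measure_display) (V : measurableType dV) (step : T -> V -> V) (v0 : V).
Hypothesis mstep : measurable_fun setT (fun y : T * V => step y.1 y.2).

Local Notation stat := (foldr step v0).

Definition shift_stat d (Z : measurableType d) (Phi : Z * V -> \bar R) :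
  (Z * T) * V -> \bar R := fun y => Phi (y.1.1, step y.1.2 y.2).

Lemma measurable_shift_stat d (Z : measurableType d) (Phi : Z * V -> \bar R) :
  measurable_fun setT Phi -> measurable_fun setT (shift_stat Phi).
Proof.
move=> mPhi; apply: (measurableT_comp (f := Phi)
  (g := fun y : (Z * T) * V => (y.1.1, step y.1.2 y.2))) => //.
apply: measurable_fun_pair; first exact: measurableT_comp measurable_fst measurable_fst.
apply: (measurableT_comp (f := fun y : T * V => step y.1 y.2)
  (g := fun y : (Z * T) * V => (y.1.2, y.2))) => //.
apply: measurable_fun_pair => //; exact: measurableT_comp measurable_snd measurable_fst.
Qed.

Lemma iid_statS n d (Z : measurableType d) (Phi : Z * V -> \bar R) z :
  iid n.+1 (fun s => Phi (z, stat s)) =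
  draw (fun t => iid n (fun s => shift_stat Phi ((z, t), stat s))).
Proof. by []. Qed.

Lemma measurable_iid_stat n d (Z : measurableType d) (Phi : Z * V -> \bar R) :
  measurable_fun setT Phi -> (forall y, 0 <= Phi y) ->
  measurable_fun setT (fun z => iid n (fun s => Phi (z, stat s))).
Proof.
elim: n d Z Phi => [|n IH] d Z Phi mPhi Phi0.
  exact: measurableT_comp mPhi (pair2_measurable v0).
under eq_fun do rewrite iid_statS.
apply: (measurable_draw (G := fun zt => iid n (fun s => shift_stat Phi (zt, stat s)))).
  exact: IH (measurable_shift_stat mPhi) (fun y => Phi0 _).
by move=> y; apply: iid_ge0 => s; exact: Phi0.
Qed.

Lemma measurable_iid_shift_stat n d (Z : measurableType d) (Phi : Z * V -> \bar R) z :
  measurable_fun setT Phi -> (forall y, 0 <= Phi y) ->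
  measurable_fun setT (fun t => iid n (fun s => shift_stat Phi ((z, t), stat s))).
Proof.
move=> mPhi Phi0; exact: measurableT_comp
  (measurable_iid_stat n (measurable_shift_stat mPhi) (fun y => Phi0 _)) (pair1_measurable z).
Qed.

Lemma iid_statD n d (Z : measurableType d) (Phi1 Phi2 : Z * V -> \bar R) z :
  measurable_fun setT Phi1 -> (forall y, 0 <= Phi1 y) ->
  measurable_fun setT Phi2 -> (forall y, 0 <= Phi2 y) ->
  iid n (fun s => Phi1 (z, stat s) + Phi2 (z, stat s)) =
  iid n (fun s => Phi1 (z, stat s)) + iid n (fun s => Phi2 (z, stat s)).
Proof.
elim: n d Z Phi1 Phi2 z => [//|n IH] d Z Phi1 Phi2 z m1 P1 m2 P2.
rewrite !iid_statS -drawD.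
- congr draw; apply/funext => t.
  exact: (IH _ _ (shift_stat Phi1) (shift_stat Phi2) (z, t)
    (measurable_shift_stat m1) (fun y => P1 _) (measurable_shift_stat m2) (fun y => P2 _)).
- exact: measurable_iid_shift_stat Phi1 z m1 P1.
- by move=> t; apply: iid_ge0 => s; exact: P1.
- exact: measurable_iid_shift_stat Phi2 z m2 P2.
- by move=> t; apply: iid_ge0 => s; exact: P2.
Qed.

Lemma iid_statZ n d (Z : measurableType d) (Phi : Z * V -> \bar R) (k : R) z :
  (0 <= k)%R -> measurable_fun setT Phi -> (forall y, 0 <= Phi y) ->
  iid n (fun s => k%:E * Phi (z, stat s)) = k%:E * iid n (fun s => Phi (z, stat s)).
Proof.
elim: n d Z Phi z => [//|n IH] d Z Phi z k0 mPhi Phi0.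
rewrite !iid_statS -drawZ //.
- congr draw; apply/funext => t.
  exact: (IH _ _ (shift_stat Phi) (z, t) k0 (measurable_shift_stat mPhi) (fun y => Phi0 _)).
- exact: measurable_iid_shift_stat Phi z mPhi Phi0.
- by move=> t; apply: iid_ge0 => s; exact: Phi0.
Qed.

Section dominated.
Variables (b : X -> R) (B : R).
Hypotheses (mb : measurable_fun setT b) (b_ge0 : forall x, (0 <= b x)%R)
  (b_int : \int[pi]_x (b x * p x)%:E = B%:E).

Lemma dominating_int_ge0 : (0 <= B)%R.
Proof.
by rewrite -lee_fin -b_int; apply: integral_ge0 => x _; rewrite lee_fin mulr_ge0.
Qed.

Lemma draw_affine (a : R) : (0 <= a)%R -> draw (fun t => (a + b t.1)%:E) = (a + B)%:E.
Proof.
move=> a0; rewrite /draw_int.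
have cstP (x : X) : \int[P]_o (a + b x)%:E = (a + b x)%:E.
  by rewrite integral_cst // [X in _ * X](probability_setT P) mule1.
under eq_integral do rewrite cstP -EFinM mulrC mulrDl EFinD.
rewrite ge0_integralD //; last 4 first.
- by move=> x _; rewrite lee_fin mulr_ge0.
- by apply/measurable_EFinP; exact: measurable_funM.
- by move=> x _; rewrite lee_fin mulr_ge0.
- by apply/measurable_EFinP; exact: measurable_funM.
under eq_integral do rewrite EFinM.
rewrite ge0_integralZl_EFin //; first by rewrite p_int1 mule1 b_int.
- by move=> x _; rewrite lee_fin.
- exact/measurable_EFinP.
Qed.

Lemma drawB (A1 A2 : T -> \bar R) (k : R) : (0 <= k)%R ->
  measurable_fun setT A1 -> (forall t, 0 <= A1 t) ->
  measurable_fun setT A2 -> (forall t, 0 <= A2 t) ->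
  (forall t, A1 t <= (k + b t.1)%:E) -> (forall t, A2 t <= (k + b t.1)%:E) ->
  draw (fun t => A1 t - A2 t) = draw A1 - draw A2.
Proof.
move=> k0 mA1 A10 mA2 A20 A1k A2k.
have mkb : measurable_fun setT (fun t : T => (k + b t.1)%:E).
  by apply/measurable_EFinP; apply: measurable_funD => //; exact: measurableT_comp.
have inner (A : T -> \bar R) x : measurable_fun setT A -> (forall t, 0 <= A t) ->
    (forall t, A t <= (k + b t.1)%:E) ->
    P.-integrable setT (fun o => A (x, o)) /\ \int[P]_o A (x, o) \is a fin_num.
  move=> mA A0 Ak; have mAx := measurableT_comp mA (pair1_measurable x).
  have Ax_le : \int[P]_o A (x, o) <= (k + b x)%:E by exact: le_integral_probability.
  have Ax_fin : \int[P]_o A (x, o) < +oo := le_lt_trans Ax_le (ltry _).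
  split; last by rewrite ge0_fin_numE // integral_ge0.
  apply/integrableP; split => //.
  by under eq_integral do rewrite gee0_abs //.
have outer (A : T -> \bar R) : measurable_fun setT A -> (forall t, 0 <= A t) ->
    (forall t, A t <= (k + b t.1)%:E) ->
    pi.-integrable setT (fun x => (p x)%:E * \int[P]_o A (x, o)).
  move=> mA A0 Ak.
  have mA' : measurable_fun setT (fun x => \int[P]_o A (x, o)).
    exact: measurable_fun_fubini_tonelli_F A mA A0.
  apply/integrableP; split; first by apply: emeasurable_funM mA'; exact/measurable_EFinP.
  under eq_integral do rewrite gee0_abs ?mule_ge0 ?lee_fin ?integral_ge0 //.
  apply: le_lt_trans (le_draw mA A0 mkb Ak) _.
  by rewrite draw_affine // ltry.
rewrite /draw_int -integralB //; [|exact: outer|exact: outer].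
apply: eq_integral => x _; have [iA1 fA1] := inner A1 x mA1 A10 A1k.
have [iA2 fA2] := inner A2 x mA2 A20 A2k.
by rewrite integralB // muleBr // fin_num_adde_defr // fin_numN.
Qed.

Lemma shift_stat_bound d (Z : measurableType d) (Phi : Z * V -> \bar R) (cb : Z -> R) :
  (forall z s, Phi (z, stat s) <= (cb z + \sum_(u <- s) b u.1)%:E) ->
  forall zt s, shift_stat Phi (zt, stat s) <= (cb zt.1 + b zt.2.1 + \sum_(u <- s) b u.1)%:E.
Proof.
by move=> Phi_le [z t] s; apply: le_trans (Phi_le z (t :: s)) _; rewrite big_cons addrA.
Qed.

Lemma iid_stat_le n d (Z : measurableType d) (Phi : Z * V -> \bar R) (cb : Z -> R) :
  measurable_fun setT Phi -> (forall y, 0 <= Phi y) -> (forall z, (0 <= cb z)%R) ->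
  (forall z s, Phi (z, stat s) <= (cb z + \sum_(u <- s) b u.1)%:E) ->
  forall z, iid n (fun s => Phi (z, stat s)) <= (cb z + n%:R * B)%:E.
Proof.
elim: n d Z Phi cb => [|n IH] d Z Phi cb mPhi Phi0 cb0 Phi_le z.
  by have := Phi_le z [::]; rewrite big_nil mul0r.
rewrite iid_statS; apply: le_trans (_ : _ <= draw (fun t => (cb z + n%:R * B + b t.1)%:E)) _.
  apply: le_draw; first exact: measurable_iid_shift_stat Phi z mPhi Phi0.
  - by move=> t; apply: iid_ge0 => s; exact: Phi0.
  - apply/measurable_EFinP; apply: measurable_funD => //; exact: measurableT_comp.
  move=> t; apply: le_trans (IH _ _ (shift_stat Phi) (fun zt => cb zt.1 + b zt.2.1)%R
    (measurable_shift_stat mPhi) (fun y => Phi0 _) (fun zt => addr_ge0 (cb0 _) (b_ge0 _))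
    (shift_stat_bound Phi_le) (z, t)) _.
  by rewrite lee_fin /= -!addrA lerD2l addrC.
rewrite draw_affine; last by rewrite addr_ge0 ?mulr_ge0 ?dominating_int_ge0.
by rewrite lee_fin mulrSr mulrDl mul1r addrA.
Qed.

Lemma iid_statB n d (Z : measurableType d) (Phi1 Phi2 : Z * V -> \bar R) (cb : Z -> R) :
  measurable_fun setT Phi1 -> (forall y, 0 <= Phi1 y) ->
  measurable_fun setT Phi2 -> (forall y, 0 <= Phi2 y) -> (forall z, (0 <= cb z)%R) ->
  (forall z s, Phi1 (z, stat s) <= (cb z + \sum_(u <- s) b u.1)%:E) ->
  (forall z s, Phi2 (z, stat s) <= (cb z + \sum_(u <- s) b u.1)%:E) ->
  forall z, iid n (fun s => Phi1 (z, stat s) - Phi2 (z, stat s)) =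
            iid n (fun s => Phi1 (z, stat s)) - iid n (fun s => Phi2 (z, stat s)).
Proof.
elim: n d Z Phi1 Phi2 cb => [//|n IH] d Z Phi1 Phi2 cb m1 P1 m2 P2 cb0 le1 le2 z.
have cb0' (zt : Z * T) : (0 <= cb zt.1 + b zt.2.1)%R by rewrite addr_ge0.
have iid_le (Phi : Z * V -> \bar R) : measurable_fun setT Phi -> (forall y, 0 <= Phi y) ->
    (forall z s, Phi (z, stat s) <= (cb z + \sum_(u <- s) b u.1)%:E) -> forall t,
    iid n (fun s => shift_stat Phi ((z, t), stat s)) <= (cb z + n%:R * B + b t.1)%:E.
  move=> mPhi Phi0 Phi_le t; apply: le_trans (iid_stat_le n (measurable_shift_stat mPhi)
    (fun y => Phi0 _) cb0' (shift_stat_bound Phi_le) (z, t)) _.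
  by rewrite lee_fin /= -!addrA lerD2l addrC.
rewrite !iid_statS -(@drawB _ _ (cb z + n%:R * B)).
- congr draw; apply/funext => t.
  exact: (IH _ _ (shift_stat Phi1) (shift_stat Phi2) _ (measurable_shift_stat m1)
    (fun y => P1 _) (measurable_shift_stat m2) (fun y => P2 _) cb0'
    (shift_stat_bound le1) (shift_stat_bound le2) (z, t)).
- by rewrite addr_ge0 ?mulr_ge0 ?dominating_int_ge0.
- exact: measurable_iid_shift_stat Phi1 z m1 P1.
- by move=> t; apply: iid_ge0 => s; exact: P1.
- exact: measurable_iid_shift_stat Phi2 z m2 P2.
- by move=> t; apply: iid_ge0 => s; exact: P2.
- exact: iid_le.
- exact: iid_le.
Qed.

End dominated.

End statistic.

Section plackett_luce.
Variables (r : X -> R) (eps : Omega -> X -> R).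
Hypotheses (mr : measurable_fun setT r)
  (meps : measurable_fun setT (fun z : Omega * X => eps z.1 z.2)).

Local Notation w := (pl_weight r eps).

Lemma measurable_pl_weight : measurable_fun setT w.
Proof.
rewrite /pl_weight; apply: measurableT_comp; first exact: measurable_expR.
apply: measurable_funD; first exact: measurableT_comp.
exact: measurableT_comp meps (measurable_fun_pair measurable_snd measurable_fst).
Qed.

Lemma pl_weight_gt0 t : (0 < w t)%R.
Proof. exact: expR_gt0. Qed.

Lemma pl_weight_sum_ge0 s : (0 <= \sum_(u <- s) w u)%R.
Proof. by apply: sumr_ge0 => u _; exact/ltW/pl_weight_gt0. Qed.

Lemma pl_weight_ratio_ge0 (c : R) u s : (0 <= c)%R ->
  (0 <= w u / (c + w u + \sum_(v <- s) w v))%R.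
Proof.
move=> c0; have := pl_weight_gt0 u; have := pl_weight_sum_ge0 s.
by move=> ? ?; apply: divr_ge0; lra.
Qed.

Definition pl_share n (c : R) (u : T) : \bar R :=
  iid n (fun s => (w u / (c + w u + \sum_(v <- s) w v))%:E).

Lemma pl_share_ge0 n c u : (0 <= c)%R -> 0 <= pl_share n c u.
Proof. by move=> c0; apply: iid_ge0 => s; rewrite lee_fin pl_weight_ratio_ge0. Qed.

Lemma pl_shareS n c u : pl_share n.+1 c u = draw (fun t => pl_share n (c + w t) u).
Proof.
congr draw; apply/funext => t; congr iid; apply/funext => s.
by rewrite big_cons addrA (addrAC c).
Qed.

Let weight_step (t : T) (v : R) := (w t + v)%R.

Let measurable_weight_step : measurable_fun setT (fun y : T * R => weight_step y.1 y.2).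
Proof. by apply: measurable_funD => //; exact: measurableT_comp measurable_pl_weight _. Qed.

Let weight_stat s : foldr weight_step 0%R s = (\sum_(u <- s) w u)%R.
Proof. by elim: s => [|t s IH]; rewrite ?big_nil // big_cons /= IH. Qed.

(* The truncation at 0 is invisible on reachable states (nonnegative offsets and
   weight sums) and makes the integrand nonnegative everywhere. *)
Let share_phi d (Z : measurableType d) (c : Z -> R) (u : Z -> T) (y : Z * R) :=
  (Num.max (w (u y.1) / (c y.1 + w (u y.1) + y.2)) 0)%:E.

Let share_phi_ge0 d (Z : measurableType d) (c : Z -> R) (u : Z -> T) y :
  0 <= share_phi c u y.
Proof. by rewrite lee_fin le_max lexx orbT. Qed.

Let measurable_share_phi d (Z : measurableType d) (c : Z -> R) (u : Z -> T) :
  measurable_fun setT c -> measurable_fun setT u -> measurable_fun setT (share_phi c u).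
Proof.
move=> mc mu; have mwu := measurableT_comp measurable_pl_weight
  (measurableT_comp mu (@measurable_fst _ _ Z R)).
apply: measurable_EFin_max0; apply: measurable_funM => //.
apply: measurableT_comp (@measurable_inv R) _; apply: measurable_funD => //.
by apply: measurable_funD => //; exact: measurableT_comp mc measurable_fst.
Qed.

Let share_phiE n d (Z : measurableType d) (c : Z -> R) (u : Z -> T) z : (0 <= c z)%R ->
  iid n (fun s => share_phi c u (z, foldr weight_step 0%R s)) = pl_share n (c z) (u z).
Proof.
move=> c0; congr iid; apply/funext => s.
by rewrite /share_phi /= weight_stat max_l // pl_weight_ratio_ge0.
Qed.

Lemma measurable_pl_share n d (Z : measurableType d) (c : Z -> R) (u : Z -> T) :
  measurable_fun setT c -> measurable_fun setT u -> (forall z, (0 <= c z)%R) ->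
  measurable_fun setT (fun z => pl_share n (c z) (u z)).
Proof.
move=> mc mu c0; under eq_fun => z do rewrite -(@share_phiE n _ _ c u z (c0 z)).
exact: (measurable_iid_stat (step := weight_step) 0%R measurable_weight_step n
  (measurable_share_phi mc mu) (share_phi_ge0 c u)).
Qed.

Lemma iid_pl_shareZ n (k c : R) u : (0 <= k)%R -> (0 <= c)%R ->
  iid n (fun s => (k * w u / (c + w u + \sum_(v <- s) w v))%:E) = k%:E * pl_share n c u.
Proof.
move=> k0 c0; rewrite -(@share_phiE n _ _ (fun _ => c) id u c0).
rewrite -(iid_statZ (step := weight_step) 0%R measurable_weight_step n u k0
  (measurable_share_phi (measurable_cst c) (@measurable_id _ T setT)) (share_phi_ge0 _ _)).
congr iid; apply/funext => s.
by rewrite /share_phi /= weight_stat max_l ?pl_weight_ratio_ge0 // -EFinM mulrA.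
Qed.

Lemma pl_share_le1 n c u : (0 <= c)%R -> pl_share n c u <= 1.
Proof.
move=> c0; rewrite -(@share_phiE n _ _ (fun _ => c) id u c0).
have zero_int : \int[pi]_x (((fun _ => 0%R) x : R) * p x)%:E = 0%:E.
  by under eq_integral do rewrite mul0r; rewrite integral0.
have share_le1 t s : share_phi (fun _ => c) id (t, foldr weight_step 0%R s) <=
    ((fun _ => 1%R) t + \sum_(v <- s) (fun _ => 0%R) v.1)%:E.
  rewrite /share_phi /= weight_stat big1_eq addr0 max_l ?pl_weight_ratio_ge0 //.
  rewrite lee_fin ler_pdivrMr ?mul1r; have := pl_weight_gt0 t; have := pl_weight_sum_ge0 s; lra.
have := iid_stat_le measurable_weight_step (measurable_cst _) (fun=> lexx 0%R) zero_int n
  (measurable_share_phi (measurable_cst c) (@measurable_id _ T setT))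
  (share_phi_ge0 _ _) (fun=> ler01) share_le1 u.
by rewrite mulr0 addr0.
Qed.

Section weighted_mean.
Variable g : X -> R.
Hypotheses (mg : measurable_fun setT g) (g_ge0 : forall x, (0 <= g x)%R).

Let mean_step (t : T) (v : R * R) := (w t * g t.1 + v.1, w t + v.2)%R.

Let measurable_mean_step :
  measurable_fun setT (fun y : T * (R * R) => mean_step y.1 y.2).
Proof.
have mw1 := measurableT_comp measurable_pl_weight (@measurable_fst _ _ T (R * R)%type).
apply: measurable_fun_pair; apply: measurable_funD.
- apply: measurable_funM => //.
  exact: measurableT_comp mg (measurableT_comp measurable_fst measurable_fst).
- exact: measurableT_comp measurable_fst measurable_snd.
- exact: mw1.
- exact: measurableT_comp measurable_snd measurable_snd.
Qed.

Let mean_stat s :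
  foldr mean_step (0, 0)%R s = (\sum_(u <- s) w u * g u.1, \sum_(u <- s) w u)%R.
Proof. by elim: s => [|t s IH]; rewrite ?big_nil // !big_cons /= IH. Qed.

Let mean_ratio (y : R * (R * R)) := (Num.max (y.2.1 / (y.1 + y.2.2)) 0)%:E.
Let mean_share (y : (R * T) * (R * R)) :=
  (Num.max (w y.1.2 / (y.1.1 + w y.1.2 + y.2.2)) 0)%:E.

Let measurable_mean_ratio : measurable_fun setT mean_ratio.
Proof.
apply: measurable_EFin_max0; apply: measurable_funM.
  exact: measurableT_comp measurable_fst measurable_snd.
apply: measurableT_comp (@measurable_inv R) _; apply: measurable_funD => //.
exact: measurableT_comp measurable_snd measurable_snd.
Qed.

Let measurable_mean_share : measurable_fun setT mean_share.
Proof.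
have mw := measurableT_comp measurable_pl_weight
  (measurableT_comp (@measurable_snd _ _ R T) (@measurable_fst _ _ (R * T)%type (R * R)%type)).
apply: measurable_EFin_max0; apply: measurable_funM => //.
apply: measurableT_comp (@measurable_inv R) _.
apply: measurable_funD; last exact: measurableT_comp measurable_snd measurable_snd.
by apply: measurable_funD => //; exact: measurableT_comp measurable_fst measurable_fst.
Qed.

Let mean_ratio_ge0 y : 0 <= mean_ratio y.
Proof. by rewrite lee_fin le_max lexx orbT. Qed.

Let mean_share_ge0 y : 0 <= mean_share y.
Proof. by rewrite lee_fin le_max lexx orbT. Qed.

Let weighted_sum_ge0 s : (0 <= \sum_(u <- s) w u * g u.1)%R.
Proof. by apply: sumr_ge0 => u _; apply: mulr_ge0; [exact/ltW/pl_weight_gt0|exact: g_ge0]. Qed.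

Let measurable_gE : measurable_fun setT (fun t : T => (g t.1)%:E).
Proof. by apply/measurable_EFinP; exact: measurableT_comp. Qed.

Let mean_step_split n c t : (0 <= c)%R ->
  iid n (fun s => ((\sum_(u <- t :: s) w u * g u.1) / (c + \sum_(u <- t :: s) w u))%:E) =
  (g t.1)%:E * pl_share n c t +
  iid n (fun s => ((\sum_(u <- s) w u * g u.1) / (c + w t + \sum_(u <- s) w u))%:E).
Proof.
move=> c0; have wt := pl_weight_gt0 t; have ct : (0 <= c + w t)%R by lra.
pose Phi1 (y : (R * T) * (R * R)) := (g y.1.2.1)%:E * mean_share y.
pose Phi2 (y : (R * T) * (R * R)) := mean_ratio (y.1.1 + w y.1.2, y.2)%R.
have mPhi1 : measurable_fun setT Phi1.
  apply: emeasurable_funM measurable_mean_share.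
  exact: measurableT_comp measurable_gE (measurableT_comp measurable_snd measurable_fst).
have mPhi2 : measurable_fun setT Phi2.
  apply: measurableT_comp measurable_mean_ratio _; apply: measurable_fun_pair => //.
  apply: measurable_funD; first exact: measurableT_comp measurable_fst measurable_fst.
  exact: measurableT_comp measurable_pl_weight (measurableT_comp measurable_snd measurable_fst).
have Phi10 y : 0 <= Phi1 y.
  by apply: mule_ge0; [rewrite lee_fin; exact: g_ge0|exact: mean_share_ge0].
transitivity (iid n (fun s => Phi1 ((c, t), foldr mean_step (0, 0)%R s) +
                              Phi2 ((c, t), foldr mean_step (0, 0)%R s))).
  congr iid; apply/funext => s; rewrite /Phi1 /Phi2 /mean_share /mean_ratio mean_stat /=.
  have S0 := pl_weight_sum_ge0 s.
  have A0 := weighted_sum_ge0 s.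
  rewrite max_l ?pl_weight_ratio_ge0 // max_l; last by apply: divr_ge0 A0 _; lra.
  by rewrite -EFinM -EFinD !big_cons addrA mulrDl mulrA [(g _ * _)%R]mulrC.
rewrite (iid_statD _ measurable_mean_step n (c, t) mPhi1 Phi10 mPhi2 (fun y => mean_ratio_ge0 _)).
congr (_ + _).
  rewrite (iid_statZ _ measurable_mean_step n (c, t) (g_ge0 t.1)
    measurable_mean_share mean_share_ge0).
  congr (_ * iid n _); apply/funext => s; rewrite /mean_share mean_stat /=.
  by rewrite max_l // pl_weight_ratio_ge0.
congr iid; apply/funext => s; rewrite /Phi2 /mean_ratio mean_stat /= max_l //.
by apply: divr_ge0 (weighted_sum_ge0 s) _; have := pl_weight_sum_ge0 s; lra.
Qed.

Lemma iid_pl_weighted_mean n (c : R) : (0 <= c)%R ->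
  iid n (fun s => ((\sum_(u <- s) w u * g u.1) / (c + \sum_(u <- s) w u))%:E) =
  n%:R%:E * draw (fun u => (g u.1)%:E * pl_share n.-1 c u).
Proof.
elim: n c => [|n IH] c c0; first by rewrite /= big_nil mul0r mul0e.
have share_ge0 n' c' u : (0 <= c')%R -> 0 <= (g u.1)%:E * pl_share n' c' u.
  by move=> c'0; rewrite mule_ge0 ?lee_fin ?g_ge0 ?pl_share_ge0.
pose G n' (tu : T * T) := (g tu.2.1)%:E * pl_share n' (c + w tu.1) tu.2.
have G0 n' tu : 0 <= G n' tu by apply: share_ge0; have := pl_weight_gt0 tu.1; lra.
have mG n' : measurable_fun setT (G n').
  apply: emeasurable_funM; first exact: measurableT_comp measurable_gE measurable_snd.
  apply: (measurable_pl_share n' (c := fun tu : T * T => (c + w tu.1)%R)) => //.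
  - by apply: measurable_funD => //; exact: measurableT_comp measurable_pl_weight measurable_fst.
  - by move=> tu; have := pl_weight_gt0 tu.1; lra.
rewrite iidS; transitivity (draw (fun t => (g t.1)%:E * pl_share n c t +
    n%:R%:E * draw (fun u => G n.-1 (t, u)))).
  congr draw; apply/funext => t; rewrite mean_step_split // IH //.
  by have := pl_weight_gt0 t; lra.
rewrite drawD //; last 4 first.
- apply: emeasurable_funM measurable_gE _.
  exact: (measurable_pl_share n (c := fun _ => c)).
- by move=> t; exact: share_ge0.
- by apply: measurable_funeM; exact: measurable_draw (mG _) (G0 _).
- by move=> t; rewrite mule_ge0 ?lee_fin ?draw_ge0.
rewrite drawZ //; [|exact: (measurable_draw (G := G n.-1))|by move=> t; exact: draw_ge0].
case: n IH => [|n] IH; first by rewrite mul0e adde0 mul1e.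
rewrite exchange_draw //=.
have -> : (fun u => draw (fun t => G n (t, u))) = (fun u => (g u.1)%:E * pl_share n.+1 c u).
  apply/funext => u; rewrite pl_shareS -drawZ ?g_ge0 //.
  - apply: (measurable_pl_share n (c := fun t : T => (c + w t)%R) (u := fun _ => u)) => //.
      by apply: measurable_funD => //; exact: measurable_pl_weight.
    by move=> t; have := pl_weight_gt0 t; lra.
  - by move=> t; apply: pl_share_ge0; have := pl_weight_gt0 t; lra.
by rewrite [in RHS]mulrS EFinD ge0_muleDl ?mul1e // ?lee_fin // draw_ge0.
Qed.

End weighted_mean.

Lemma pl_weighted_mean_le_sum (a : T -> R) s : (forall t, (0 <= a t)%R) ->
  ((\sum_(u <- s) w u * a u) / \sum_(u <- s) w u <= \sum_(u <- s) a u)%R.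
Proof.
move=> a0; have [->|S0] := eqVneq (\sum_(u <- s) w u)%R 0%R.
  by rewrite invr0 mulr0 sumr_ge0.
rewrite ler_pdivrMr ?lt_def ?S0 ?pl_weight_sum_ge0 // mulrC.
by apply: sum_mul_le_mul_sum => // u; exact/ltW/pl_weight_gt0.
Qed.

Lemma choice_kernelE K x :
  choice_kernel pi P p r eps K x = K%:R%:E * \int[P]_o pl_share K.-1 0 (x, o).
Proof.
rewrite /choice_kernel -ge0_integralZl_EFin //.
- by apply: eq_integral => o _; rewrite -iid_pl_shareZ // add0r.
- by move=> o _; exact: pl_share_ge0.
- exact: (measurable_pl_share K.-1 (c := fun _ => 0%R) (u := fun o => (x, o))
    (measurable_cst _) (pair1_measurable x) (fun=> lexx 0%R)).
Qed.

Section curated_mean.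
Variables (K : nat) (f : X -> R).
Hypotheses (mf : measurable_fun setT f)
  (f_int : \int[pi]_x (`|f x| * p x)%:E < +oo).

Let B := fine (\int[pi]_x (`|f x| * p x)%:E).

Let B_int : \int[pi]_x (`|f x| * p x)%:E = B%:E.
Proof. by rewrite fineK // ge0_fin_numE // integral_ge0 // => x _; rewrite lee_fin mulr_ge0. Qed.

Let measurable_normf : measurable_fun setT (fun x => `|f x|)%R.
Proof. exact: measurableT_comp. Qed.

Let funrpos_le_norm x : (f^\+ x <= `|f x|)%R.
Proof. by rewrite -[leRHS](congr1 (fun h => h x) (funrposDneg f)) /= lerDl funrneg_ge0. Qed.

Let funrneg_le_norm x : (f^\- x <= `|f x|)%R.
Proof. by rewrite -[leRHS](congr1 (fun h => h x) (funrposDneg f)) /= lerDr funrpos_ge0. Qed.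

Let funrposBnegE x : (f^\+ x - f^\- x)%R = f x.
Proof. by have := congr1 (fun h => h x) (funrposBneg f); rewrite /= !fctE. Qed.

Let split_step (t : T) (v : (R * R) * R) :=
  ((w t * f^\+ t.1 + v.1.1, w t * f^\- t.1 + v.1.2), w t + v.2)%R.

Let measurable_split_step :
  measurable_fun setT (fun y : T * ((R * R) * R) => split_step y.1 y.2).
Proof.
have mw := measurableT_comp measurable_pl_weight (@measurable_fst _ _ T ((R * R) * R)%type).
have mfst (h : X -> R) : measurable_fun setT h ->
    measurable_fun setT (fun y : T * ((R * R) * R) => h y.1.1).
  by move=> mh; exact: measurableT_comp mh (measurableT_comp measurable_fst measurable_fst).
apply: measurable_fun_pair; first apply: measurable_fun_pair.
- apply: measurable_funD; first exact: measurable_funM mw (mfst _ (measurable_funrpos mf)).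
  by do 2 apply: measurableT_comp measurable_fst _; exact: measurable_snd.
- apply: measurable_funD; first exact: measurable_funM mw (mfst _ (measurable_funrneg mf)).
  apply: measurableT_comp measurable_snd _; apply: measurableT_comp measurable_fst _.
  exact: measurable_snd.
- by apply: measurable_funD => //; exact: measurableT_comp measurable_snd measurable_snd.
Qed.

Let split_stat s : foldr split_step ((0, 0), 0)%R s =
  ((\sum_(u <- s) w u * f^\+ u.1, \sum_(u <- s) w u * f^\- u.1), \sum_(u <- s) w u)%R.
Proof. by elim: s => [|t s IH]; rewrite ?big_nil // !big_cons /= IH. Qed.

Let part_phi (sel : (R * R) * R -> R) (y : unit * ((R * R) * R)) :=
  (Num.max (sel y.2 / y.2.2) 0)%:E.

Let part_phi_ge0 sel y : 0 <= part_phi sel y.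
Proof. by rewrite lee_fin le_max lexx orbT. Qed.

Let measurable_part_phi sel : measurable_fun setT sel -> measurable_fun setT (part_phi sel).
Proof.
move=> msel; apply: measurable_EFin_max0; apply: measurable_funM.
  exact: measurableT_comp msel measurable_snd.
apply: measurableT_comp (@measurable_inv R) _.
exact: measurableT_comp measurable_snd measurable_snd.
Qed.

Let part_phiE (g : X -> R) (sel : (R * R) * R -> R) s : (forall x, (0 <= g x)%R) ->
  sel (foldr split_step ((0, 0), 0)%R s) = (\sum_(u <- s) w u * g u.1)%R ->
  part_phi sel (tt, foldr split_step ((0, 0), 0)%R s) =
  ((\sum_(u <- s) w u * g u.1) / (0 + \sum_(u <- s) w u))%:E.
Proof.
move=> g0 selE; rewrite /part_phi /= selE split_stat add0r max_l //.
apply: divr_ge0 (pl_weight_sum_ge0 s).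
by apply: sumr_ge0 => u _; rewrite mulr_ge0 // ltW // pl_weight_gt0.
Qed.

Let part_phi_le (g : X -> R) (sel : (R * R) * R -> R) :
  (forall x, (0 <= g x <= `|f x|)%R) ->
  (forall s, sel (foldr split_step ((0, 0), 0)%R s) = \sum_(u <- s) w u * g u.1)%R ->
  forall z s, part_phi sel (z, foldr split_step ((0, 0), 0)%R s) <=
    (0 + \sum_(u <- s) `|f u.1|)%:E.
Proof.
move=> g_bnd selE [] s; have g0 x : (0 <= g x)%R by case/andP: (g_bnd x).
rewrite (@part_phiE g sel s g0 (selE s)) !add0r lee_fin.
apply: le_trans (pl_weighted_mean_le_sum _ (fun t => g0 t.1)) _.
by apply: ler_sum => u _; case/andP: (g_bnd u.1).
Qed.

Let share_int x := \int[P]_o pl_share K.-1 0 (x, o).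

Let measurable_share : measurable_fun setT (pl_share K.-1 0).
Proof.
exact: (measurable_pl_share K.-1 (c := fun _ => 0%R) (u := id)
  (measurable_cst _) (@measurable_id _ T setT) (fun=> lexx 0%R)).
Qed.

Let measurable_share_int : measurable_fun setT share_int.
Proof.
exact: measurable_fun_fubini_tonelli_F _ measurable_share (fun t => pl_share_ge0 _ _ (lexx 0%R)).
Qed.

Let share_int_ge0 x : 0 <= share_int x.
Proof. by apply: integral_ge0 => o _; exact: pl_share_ge0. Qed.

Let share_int_le1 x : share_int x <= 1.
Proof.
apply: le_integral_probability; first exact: measurableT_comp measurable_share (pair1_measurable x).
- by move=> o; exact: pl_share_ge0.
- by move=> o; apply: pl_share_le1.
Qed.

Let share_int_fin_num x : share_int x \is a fin_num.
Proof. by rewrite ge0_fin_numE // (le_lt_trans (share_int_le1 x) (ltry 1%R)). Qed.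

Let measurable_weighted_share_int (g : X -> R) : measurable_fun setT g ->
  measurable_fun setT (fun x => (g x * p x)%:E * share_int x).
Proof.
move=> mg; apply: emeasurable_funM measurable_share_int.
exact/measurable_EFinP/measurable_funM.
Qed.

Let iid_part (g : X -> R) (sel : (R * R) * R -> R) :
  measurable_fun setT g -> (forall x, (0 <= g x)%R) ->
  (forall s, sel (foldr split_step ((0, 0), 0)%R s) = \sum_(u <- s) w u * g u.1)%R ->
  iid K (fun s => part_phi sel (tt, foldr split_step ((0, 0), 0)%R s)) =
  K%:R%:E * \int[pi]_x ((g x * p x)%:E * share_int x).
Proof.
move=> mg g0 selE; under eq_fun => s do rewrite (@part_phiE g sel s g0 (selE s)).
rewrite iid_pl_weighted_mean // draw_fstM //.
by move=> t; exact: pl_share_ge0.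
Qed.

Let integrable_part (g : X -> R) : measurable_fun setT g ->
  (forall x, (0 <= g x <= `|f x|)%R) ->
  pi.-integrable setT (fun x => K%:R%:E * ((g x * p x)%:E * share_int x)).
Proof.
move=> mg g_bnd; have g0 x : (0 <= g x)%R by case/andP: (g_bnd x).
have mpart := measurable_funeM K%:R%:E (measurable_weighted_share_int mg).
apply/integrableP; split => //.
under eq_integral do rewrite gee0_abs ?mule_ge0 ?lee_fin ?mulr_ge0 ?share_int_ge0 //.
apply: le_lt_trans (_ : _ <= \int[pi]_x (K%:R%:E * (`|f x| * p x)%:E)) _.
  apply: ge0_le_integral => //.
  - by move=> x _; rewrite !mule_ge0 ?lee_fin ?mulr_ge0 ?share_int_ge0.
  - exact/measurable_funeM/measurable_EFinP/measurable_funM.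
  move=> x _; apply: lee_wpmul2l; first by rewrite lee_fin.
  rewrite -[leRHS]mule1; apply: lee_pmul; rewrite ?lee_fin ?mulr_ge0 ?share_int_le1 //.
  by rewrite ler_wpM2r //; case/andP: (g_bnd x).
rewrite ge0_integralZl_EFin //; last exact/measurable_EFinP/measurable_funM.
  by rewrite B_int -EFinM ltry.
by move=> x _; rewrite lee_fin mulr_ge0.
Qed.

Let curated_cond_split s : (curated_cond r eps f s)%:E =
  part_phi (fun v => v.1.1) (tt, foldr split_step ((0, 0), 0)%R s) -
  part_phi (fun v => v.1.2) (tt, foldr split_step ((0, 0), 0)%R s).
Proof.
have S0 := pl_weight_sum_ge0 s.
have wf_ge0 (g : X -> R) : (forall x, (0 <= g x)%R) -> (0 <= \sum_(u <- s) w u * g u.1)%R.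
  by move=> g0; apply: sumr_ge0 => u _; rewrite mulr_ge0 // ltW // pl_weight_gt0.
rewrite /part_phi /= split_stat /= !max_l ?divr_ge0 ?wf_ge0 //.
rewrite -EFinB -mulrBl -sumrB mulr_suml /curated_cond; congr EFin.
by apply: eq_bigr => t _; rewrite -mulrBr funrposBnegE mulrAC.
Qed.

Lemma curated_expectE : curated_expect pi P p r eps K f =
  \int[pi]_x ((f x * p x)%:E * choice_kernel pi P p r eps K x).
Proof.
have fp_bnd x : (0 <= f^\+ x <= `|f x|)%R by rewrite funrpos_ge0 funrpos_le_norm.
have fn_bnd x : (0 <= f^\- x <= `|f x|)%R by rewrite funrneg_ge0 funrneg_le_norm.
have sel1E s : (foldr split_step ((0, 0), 0)%R s).1.1 = (\sum_(u <- s) w u * f^\+ u.1)%R.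
  by rewrite split_stat.
have sel2E s : (foldr split_step ((0, 0), 0)%R s).1.2 = (\sum_(u <- s) w u * f^\- u.1)%R.
  by rewrite split_stat.
rewrite /curated_expect; under eq_fun => s do rewrite curated_cond_split.
transitivity
  (iid K (fun s => part_phi (fun v => v.1.1) (tt, foldr split_step ((0, 0), 0)%R s)) -
   iid K (fun s => part_phi (fun v => v.1.2) (tt, foldr split_step ((0, 0), 0)%R s))).
  exact: (iid_statB measurable_split_step measurable_normf (fun x => normr_ge0 _) B_int K
    (measurable_part_phi (measurableT_comp measurable_fst measurable_fst)) (part_phi_ge0 _)
    (measurable_part_phi (measurableT_comp measurable_snd measurable_fst)) (part_phi_ge0 _)
    (fun=> lexx 0%R) (part_phi_le fp_bnd sel1E) (part_phi_le fn_bnd sel2E) tt).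
rewrite (iid_part (sel := fun v => v.1.1) (measurable_funrpos mf) (@funrpos_ge0 _ _ f) sel1E).
rewrite (iid_part (sel := fun v => v.1.2) (measurable_funrneg mf) (@funrneg_ge0 _ _ f) sel2E).
rewrite -!ge0_integralZl_EFin //; last 4 first.
- by move=> x _; rewrite mule_ge0 ?lee_fin ?mulr_ge0 ?share_int_ge0.
- exact/measurable_weighted_share_int/measurable_funrneg.
- by move=> x _; rewrite mule_ge0 ?lee_fin ?mulr_ge0 ?share_int_ge0.
- exact/measurable_weighted_share_int/measurable_funrpos.
rewrite -integralB //; [|exact: integrable_part (measurable_funrpos mf) fp_bnd|
  exact: integrable_part (measurable_funrneg mf) fn_bnd].
apply: eq_integral => x _; rewrite choice_kernelE -/(share_int x).
rewrite -(fineK (share_int_fin_num x)) -!EFinM -EFinB -funrposBnegE; congr EFin; ring.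
Qed.

End curated_mean.

End plackett_luce.

End draws.

Theorem lemma1 (R : realType) (dX dO : measure_display)
  (X : measurableType dX) (Omega : measurableType dO)
  (pi : {measure set X -> \bar R}) (P : probability Omega R)
  (r : X -> R) (eps : Omega -> X -> R) (K : nat) (p : X -> R) :
  sigma_finite setT pi ->
  measurable_fun setT r ->
  measurable_fun setT (fun z : Omega * X => eps z.1 z.2) ->
  (2 <= K)%N ->
  measurable_fun setT p ->
  (forall x, 0 <= p x) ->
  (\int[pi]_x (p x)%:E = 1)%E ->
  (forall f : X -> R, measurable_fun setT f ->
     (\int[pi]_x (`|f x| * p x)%:E < +oo)%E ->
     curated_expect pi P p r eps K f =
     (\int[pi]_x ((f x * p x)%:E * choice_kernel pi P p r eps K x))%E)
  /\
  (forall A : set X, measurable A ->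
     curated_expect pi P p r eps K (\1_A) =
     (\int[pi]_(x in A) ((p x)%:E * choice_kernel pi P p r eps K x))%E).
Proof.
move=> pi_sigma_finite mr meps _ mp p_ge0 p_int1.
split=> [f mf f_int|A mA]; first exact: curated_expectE.
have mA1 : measurable_fun setT (\1_A : X -> R) by apply/measurable_indicP.
rewrite curated_expectE //.
  rewrite [RHS]integral_mkcond; apply: eq_integral => x _.
  by rewrite patchE indicE; case: (x \in A); rewrite ?mul1r ?mul0r ?mul0e.
apply: le_lt_trans (ltry 1%R); rewrite -p_int1; apply: ge0_le_integral => //.
- by move=> x _; rewrite lee_fin mulr_ge0.
- by apply/measurable_EFinP; apply: measurable_funM => //; exact: measurableT_comp.
- exact/measurable_EFinP.
by move=> x _; rewrite lee_fin indicE; case: (x \in A); rewrite ?normr1 ?normr0 ?mul1r ?mul0r.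
Qed.
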